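(* Let $\hat H$, $\tilde\tau>0$ and $\Phi$ be as in the context, and let $\alpha,\beta\in\mathbb{R}$ satisfy $|\alpha|+|\beta|<1$. Then every root $w$ of $\Phi(w)=0$ satisfies $\operatorname{Re} w<0$; i.e. the equilibrium is locally asymptotically stable, regardless of the delay kernel and of $\tilde\tau$.
   Context: Let $g:[0,\infty)\to[0,\infty)$ be a probability density with mean $\int_0^\infty t\,g(t)\,dt=1$ (or the Dirac measure at $1$), and let $\hat H(w)=\int_0^\infty g(s)e^{-ws}\,ds$; then $\hat H(0)=1$, $\hat H'(0)=-1$, and $|\hat H(w)|\le 1$ for $\operatorname{Re} w\ge 0$. The delay kernel with mean $\tau>0$ is $h(t)=\tau^{-1}g(t/\tau)$. For a time constant $\bar\tau>0$ put $\tilde\tau=\tau/\bar\tau$. For $\alpha,\beta\in\mathbb{R}$ the (rescaled) characteristic equation of the linearized coupled Wilson–Cowan system is $$\Phi(w):=(w+\tilde\tau)^4-\alpha\,\tilde\tau^2(w+\tilde\tau)^2\hat H(w)^2+\beta\,\tilde\tau^4\hat H(w)^4=0,$$ equivalently $Q(w)^2-\alpha Q(w)+\beta=0$ with $Q(w)=\big(\frac{w+\tilde\tau}{\tilde\tau\hat H(w)}\big)^2$. The equilibrium is locally asymptotically stable iff all roots have negative real part. *)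

From HB Require Import structures.
From mathcomp Require Import all_boot all_order all_algebra.
From mathcomp Require Import all_classical all_reals all_analysis.
From mathcomp Require Import complex.
Set Implicit Arguments. Unset Strict Implicit. Unset Printing Implicit Defensive.
Import Order.TTheory GRing.Theory Num.Theory.
Local Open Scope ring_scope.
Local Open Scope complex_scope.

Section Defs.
Variable R : realType.
Local Notation mu := (@lebesgue_measure R).

Definition nonneg_half : set R := [set x : R | 0 <= x].

Definition prob_density_mean1 (g : R -> R) : Prop :=
  [/\ measurable_fun nonneg_half g,
      (forall t, 0 <= t -> 0 <= g t),
      (\int[mu]_(t in nonneg_half) (g t)%:E = 1)%E
    & (\int[mu]_(t in nonneg_half) (t * g t)%:E = 1)%E].

(* Laplace transform  \int_0^oo g(s) e^{-w s} ds  of a density, written via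
   e^{-ws} = e^{-Re w s} (cos (Im w s) - i sin (Im w s)) *)
Definition laplace_density (g : R -> R) (w : R[i]) : R[i] :=
  (Rintegral mu nonneg_half (fun s : R => g s * expR (- (complex.Re w : R) * s) * cos ((complex.Im w : R) * s)))
  -i* (Rintegral mu nonneg_half (fun s : R => g s * expR (- (complex.Re w : R) * s) * sin ((complex.Im w : R) * s))).

(* Laplace transform of the Dirac measure at 1 : e^{-w} *)
Definition laplace_dirac1 (w : R[i]) : R[i] :=
  (expR (- complex.Re w) * cos (complex.Im w)) -i* (expR (- complex.Re w) * sin (complex.Im w)).

(* Hh is the Laplace transform \hat H of an admissible kernel (density with
   mean 1, or Dirac at 1), on the closed right half-plane where it is defined *)
Definition is_kernel_transform (Hh : R[i] -> R[i]) : Prop :=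
  (exists g : R -> R, prob_density_mean1 g /\
     forall w : R[i], 0 <= complex.Re w -> Hh w = laplace_density g w)
  \/ (forall w : R[i], 0 <= complex.Re w -> Hh w = laplace_dirac1 w).

Definition Phi (Hh : R[i] -> R[i]) (tt alpha beta : R) (w : R[i]) : R[i] :=
  (w + tt%:C) ^+ 4
  - alpha%:C * tt%:C ^+ 2 * (w + tt%:C) ^+ 2 * Hh w ^+ 2
  + beta%:C * tt%:C ^+ 4 * Hh w ^+ 4.

End Defs.

From HB Require Import structures.
From mathcomp Require Import all_boot all_order all_algebra.
From mathcomp Require Import all_classical all_reals all_analysis.
From mathcomp Require Import complex measurable_realfun.
From mathcomp Require Import ring lra.
Import Order.TTheory GRing.Theory Num.Theory.
Local Open Scope ring_scope.

(** Suppose [Re w >= 0]. Then [|w + tt| >= tt], and [|Hh w| <= 1]: for the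
    transform of a density [g], with [A], [B] the integrals of [g] against
    [u = e^(-a s) cos (b s)] and [v = e^(-a s) sin (b s)], one has
    [A^2 + B^2 = int g (A u + B v) <= sqrt (A^2 + B^2)] because [u^2 + v^2 <= 1].
    Taking absolute values in [Phi w = 0] with [h = tt * Hh w] gives
    [|w + tt|^4 <= |alpha| |w + tt|^2 |h|^2 + |beta| |h|^4
                < (|alpha| + |beta|) |w + tt|^4 <= |w + tt|^4] since [|h| <= |w + tt|],
    a contradiction. *)

Lemma dotr2_le_sqrt {R : rcfType} (A B u v : R) :
  u ^+ 2 + v ^+ 2 <= 1 -> A * u + B * v <= Num.sqrt (A ^+ 2 + B ^+ 2).
Proof.
move=> uv1; set N := Num.sqrt _.
have N0 : 0 <= N := sqrtr_ge0 _.
have NN : N ^+ 2 = A ^+ 2 + B ^+ 2 by rewrite sqr_sqrtr // addr_ge0 ?sqr_ge0.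
have lagrange : (A * u + B * v) ^+ 2 + (A * v - B * u) ^+ 2
    = (A ^+ 2 + B ^+ 2) * (u ^+ 2 + v ^+ 2) by ring.
have : (A * u + B * v) ^+ 2 <= N ^+ 2.
  rewrite NN -[leRHS]mulr1.
  apply: le_trans (_ : _ <= (A ^+ 2 + B ^+ 2) * (u ^+ 2 + v ^+ 2)) _.
    by rewrite -lagrange lerDl sqr_ge0.
  by rewrite ler_wpM2l // addr_ge0 ?sqr_ge0.
nra.
Qed.

Lemma normr_dotr2_le_sqrt {R : rcfType} (A B u v : R) :
  u ^+ 2 + v ^+ 2 <= 1 -> `|A * u + B * v| <= Num.sqrt (A ^+ 2 + B ^+ 2).
Proof.
move=> uv1; rewrite ler_norml dotr2_le_sqrt // andbT lerNl opprD -!mulNr.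
by rewrite -[A ^+ 2]sqrrN -[B ^+ 2]sqrrN dotr2_le_sqrt.
Qed.

Lemma integrableZl_EFin d (T : measurableType d) (R : realType)
    (mu : {measure set T -> \bar R}) (D : set T) (k : R) (f : T -> R) :
  measurable D -> mu.-integrable D (EFin \o f) ->
  mu.-integrable D (EFin \o (fun t => k * f t)).
Proof.
by move=> mD /(integrableZl mD k); apply: eq_integrable => // t _; rewrite /= EFinM.
Qed.

Section ProbabilityDensity.
Context d (T : measurableType d) (R : realType) (mu : {measure set T -> \bar R}).
Variables (D : set T) (g : T -> R).
Hypotheses (mD : measurable D) (mg : measurable_fun D g)
  (g_ge0 : forall t, D t -> 0 <= g t) (g_mass1 : (\int[mu]_(t in D) (g t)%:E = 1)%E).

Lemma density_integrable : mu.-integrable D (EFin \o g).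
Proof.
apply/integrableP; split; first exact/measurable_EFinP.
rewrite (eq_integral (fun t => (g t)%:E)) ?g_mass1 ?ltry// => t /[!inE] Dt.
by rewrite /= ger0_norm ?g_ge0.
Qed.

Lemma integrable_density_mulr (h : T -> R) (c : R) : measurable_fun D h ->
  (forall t, D t -> `|h t| <= c) -> mu.-integrable D (EFin \o (fun t => g t * h t)).
Proof.
move=> mh hc; apply: le_integrable (integrableZl mD c density_integrable) => //.
  by apply/measurable_EFinP; exact: measurable_funM.
move=> t Dt; rewrite /= lee_fin normrM ger0_norm ?g_ge0// mulrC.
by rewrite (le_trans _ (ler_norm _))// ler_wpM2r ?g_ge0 ?hc.
Qed.

Lemma Rintegral_density_cst (c : R) : \int[mu]_(t in D) (c * g t) = c.
Proof. by rewrite RintegralZl ?density_integrable// /Rintegral g_mass1 mulr1. Qed.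

Lemma density_moments_le1 (u v : T -> R) :
  measurable_fun D u -> measurable_fun D v ->
  (forall t, D t -> u t ^+ 2 + v t ^+ 2 <= 1) ->
  (\int[mu]_(t in D) (g t * u t)) ^+ 2 + (\int[mu]_(t in D) (g t * v t)) ^+ 2 <= 1.
Proof.
move=> mU mV uv1.
have u1 t : D t -> `|u t| <= 1.
  by move=> Dt; have := uv1 t Dt; have := sqr_ge0 (v t); rewrite ler_norml; nra.
have v1 t : D t -> `|v t| <= 1.
  by move=> Dt; have := uv1 t Dt; have := sqr_ge0 (u t); rewrite ler_norml; nra.
have gu_int := @integrable_density_mulr u 1 mU u1.
have gv_int := @integrable_density_mulr v 1 mV v1.
set A := \int[mu]_(t in D) _; set B := \int[mu]_(t in D) _.
set N := Num.sqrt (A ^+ 2 + B ^+ 2).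
have N0 : 0 <= N := sqrtr_ge0 _.
have NN : N ^+ 2 = A ^+ 2 + B ^+ 2 by rewrite sqr_sqrtr // addr_ge0 ?sqr_ge0.
have AB_int : A ^+ 2 + B ^+ 2 = \int[mu]_(t in D) (g t * (A * u t + B * v t)).
  transitivity (\int[mu]_(t in D) (A * (g t * u t) + B * (g t * v t))).
    by rewrite RintegralD ?integrableZl_EFin // !RintegralZl.
  by apply: eq_Rintegral => t _; ring.
have : A ^+ 2 + B ^+ 2 <= N.
  rewrite AB_int -[leRHS]Rintegral_density_cst le_Rintegral //.
  - apply: (@integrable_density_mulr _ N) => [|t Dt].
      by apply: measurable_funD; apply: measurable_funM.
    exact: normr_dotr2_le_sqrt (uv1 t Dt).
  - exact: integrableZl_EFin density_integrable.
  move=> t Dt; rewrite [N * _]mulrC ler_wpM2l ?g_ge0 //.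
  exact: dotr2_le_sqrt (uv1 t Dt).
rewrite -NN; nra.
Qed.
End ProbabilityDensity.

Lemma quartic_mix_lt {K : numDomainType} (a b h z : K) :
  0 <= a -> 0 <= b -> a + b < 1 -> 0 <= h <= z -> 0 < z ->
  a * z ^+ 2 * h ^+ 2 + b * h ^+ 4 < z ^+ 4.
Proof.
move=> a0 b0 ab1 /andP[h0 hz] z0.
have hz_pow n : h ^+ n <= z ^+ n by apply: lerXn2r; rewrite ?nnegrE // (le_trans h0).
apply: le_lt_trans (_ : _ <= (a + b) * z ^+ 4) _.
  rewrite mulrDl lerD ?ler_wpM2l ?hz_pow //.
  have -> : z ^+ 4 = z ^+ 2 * z ^+ 2 by rewrite -exprD.
  by rewrite -mulrA ler_wpM2l // ler_wpM2l ?exprn_ge0 ?(ltW z0).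
by rewrite (gtr_pMl _ (exprn_gt0 4 z0)).
Qed.

Lemma quartic_root_norm_le {K : numDomainType} (a b h z : K) :
  z ^+ 4 - a * z ^+ 2 * h ^+ 2 + b * h ^+ 4 = 0 ->
  `|z| ^+ 4 <= `|a| * `|z| ^+ 2 * `|h| ^+ 2 + `|b| * `|h| ^+ 4.
Proof.
move=> root; rewrite -normrX.
have -> : z ^+ 4 = a * z ^+ 2 * h ^+ 2 - b * h ^+ 4.
  by apply/eqP; rewrite -subr_eq0 -root; apply/eqP; ring.
by apply: le_trans (ler_normB _ _) _; rewrite !normrM.
Qed.

Local Open Scope complex_scope.

Lemma normcR {R : rcfType} (x : R) : `|x%:C| = `|x|%:C.
Proof. by rewrite normc_def /= expr0n addr0 sqrtr_sqr. Qed.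

Lemma normc_le1 {R : rcfType} (x y : R) : x ^+ 2 + y ^+ 2 <= 1 -> `|x -i* y| <= 1.
Proof. by move=> xy1; rewrite normc_def /= sqrrN lecR -sqrtr1 ler_wsqrtr. Qed.

Lemma normc_addr_ge {R : rcfType} (w : R[i]) (t : R) :
  0 <= complex.Re w -> 0 <= t -> t%:C <= `|w + t%:C|.
Proof.
case: w => a b /= a0 t0; apply: le_trans (normc_ge_Re _).
by rewrite lecR /= ger0_norm ?addr_ge0 // lerDr.
Qed.

Section KernelTransform.
Context {R : realType}.
Local Notation mu := (@lebesgue_measure R).

Lemma nonneg_half_measurable : measurable (@nonneg_half R).
Proof.
have -> : @nonneg_half R = `[0, +oo[%classic.
  by apply/seteqP; split => x /=; rewrite in_itv /= andbT.
exact: measurable_itv.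
Qed.

Lemma expR_cos_sin_sqr_le1 (a b : R) : 0 <= a ->
  (expR (- a) * cos b) ^+ 2 + (expR (- a) * sin b) ^+ 2 <= 1.
Proof.
move=> a0; rewrite !exprMn -mulrDr cos2Dsin2 mulr1 expr_le1 ?expR_ge0 //.
by rewrite expR_le1 oppr_le0.
Qed.

Lemma laplace_density_norm_le1 (g : R -> R) (w : R[i]) :
  prob_density_mean1 g -> 0 <= complex.Re w -> `|laplace_density g w| <= 1.
Proof.
case=> mg g0 g1 _ Rew; apply: normc_le1.
set a := complex.Re w; set b := complex.Im w.
have damped (h : R -> R) : measurable_fun setT h ->
    measurable_fun (@nonneg_half R) (fun s => expR (- a * s) * h (b * s)).
  move=> mh; apply: measurable_funM.
    by apply: measurableT_comp; [exact: measurable_expR | apply: measurable_funM].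
  by apply: measurableT_comp; [exact: mh | apply: measurable_funM].
have assoc (h : R -> R) : (fun s => g s * expR (- a * s) * h (b * s))
    = (fun s => g s * (expR (- a * s) * h (b * s))).
  by apply/funext => s; rewrite mulrA.
rewrite (assoc cos) (assoc sin) density_moments_le1 //.
- exact: nonneg_half_measurable.
- apply: damped; exact: continuous_measurable_fun (@continuous_cos R).
- apply: damped; exact: continuous_measurable_fun (@continuous_sin R).
by move=> s s0; rewrite !mulNr expR_cos_sin_sqr_le1 // mulr_ge0.
Qed.

Lemma kernel_transform_norm_le1 (Hh : R[i] -> R[i]) (w : R[i]) :
  is_kernel_transform Hh -> 0 <= complex.Re w -> `|Hh w| <= 1.
Proof.
move=> + Rew; case=> [[g [dg ->]] | ->] //; first exact: laplace_density_norm_le1.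
exact/normc_le1/expR_cos_sin_sqr_le1.
Qed.

End KernelTransform.

Theorem theorem4 (R : realType) (Hh : R[i] -> R[i]) (tt alpha beta : R) :
  is_kernel_transform Hh -> 0 < tt -> `|alpha| + `|beta| < 1 ->
  forall w : R[i], Phi Hh tt alpha beta w = 0 -> complex.Re w < 0.
Proof.
move=> HK tt0 ab1 w Phi0; rewrite ltNge; apply/negP => Rew.
set z := w + tt%:C; set h := tt%:C * Hh w.
have root : z ^+ 4 - alpha%:C * z ^+ 2 * h ^+ 2 + beta%:C * h ^+ 4 = 0.
  by rewrite /z /h -Phi0 /Phi; ring.
have tt_le_z : tt%:C <= `|z| by rewrite normc_addr_ge // ltW.
have h_le_tt : `|h| <= tt%:C.
  rewrite normrM normcR (ger0_norm (ltW tt0)); apply: ler_piMr.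
    by rewrite lecR ltW.
  exact: kernel_transform_norm_le1.
move/quartic_root_norm_le: root; rewrite lt_geF //.
apply: quartic_mix_lt => //.
- by rewrite !normcR -rmorphD ltcR.
- by rewrite normr_ge0 (le_trans h_le_tt).
by rewrite (lt_le_trans _ tt_le_z) ?ltcR.
Qed.
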